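(* There is an absolute constant $c>0$ such that for all real $\mu,\mu^*>0$ with $\mu\in[c,\tfrac43\mu^*]$, the function $$G(\mu,\mu^* )=\mathbb E_{x\sim\mathcal N(\mu^*,1)}\Big[-\tfrac12\tanh''(\mu x)\mu^2x+\tanh'(\mu x)\mu x^2-\tanh'(\mu x)\mu\Big]$$ satisfies $G(\mu,\mu^* )\le0.01\,|\mu-\mu^*|$. *)

From Stdlib Require Import Reals.
From Coquelicot Require Export Coquelicot.
Open Scope R_scope.

Definition tanh (x : R) : R := (exp x - exp (- x)) / (exp x + exp (- x)).

Definition gauss_density (m x : R) : R :=
  exp (- (x - m) ^ 2 / 2) / sqrt (2 * PI).

Definition gauss_expect (m : R) (f : R -> R) : R :=
  RInt_gen (fun x => gauss_density m x * f x)
    (Rbar_locally m_infty) (Rbar_locally p_infty).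

Definition G (mu mus : R) : R :=
  gauss_expect mus (fun x =>
    - / 2 * Derive_n tanh 2 (mu * x) * mu ^ 2 * x
    + Derive_n tanh 1 (mu * x) * mu * x ^ 2
    - Derive_n tanh 1 (mu * x) * mu).

(* Write the integrand of G(mu, m) as phi_m(x) k_mu(x), where phi_m is the N(m,1) density and
   k_mu(x) = mu sech^2(mu x) (mu x tanh(mu x) + x^2 - 1).

   For m = mu the integral vanishes: phi_mu(x) k_mu(x) + phi_mu(-x) k_mu(-x) is the derivative of an
   odd function that is O(1/x) at infinity, so the symmetric integrals over [-n, n] tend to 0.

   For m <> mu, the mean value theorem gives
   phi_m(x) - phi_mu(x) = (m - mu) (x - xi) e^{-(x - xi)^2/2} / sqrt(2 pi) with xi >= 3 mu / 4.
   For mu >= 1000 the product of (x - xi) e^{-(x - xi)^2/2} with (1 + x^2) |k_mu(x)|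
   is at most 1/400: when x <= 3 mu / 8 the Gaussian factor is tiny, and when x > 3 mu / 8
   the factor sech^2(mu x) is.
   Integrating against 1/(1 + x^2) then gives at most pi |m - mu| / 400 <= |m - mu| / 100.
   All integrands are continuous and O(1/(1 + x^2)), so the improper integrals converge. *)

From Stdlib Require Import Reals Lra FunctionalExtensionality.
Open Scope R_scope.

Lemma atan_le_id y : 0 <= y -> atan y <= y.
Proof.
  intros Hy.
  destruct (MVT_gen atan 0 y (fun x => / (1 + x ^ 2))) as [c [_ Hmvt]].
  - intros x _. apply (is_derive_ext atan); [reflexivity|].
    replace (x ^ 2) with (x²) by (unfold Rsqr; ring). apply is_derive_atan.
  - intros x _. apply derivable_continuous_pt, derivable_pt_atan.
  - rewrite atan_0, !Rminus_0_r in Hmvt. rewrite Hmvt.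
    assert (Hc : 1 <= 1 + c ^ 2) by nra.
    assert (0 < / (1 + c ^ 2) <= 1).
    { split; [apply Rinv_0_lt_compat; lra|].
      rewrite <- Rinv_1. apply Rinv_le_contravar; lra. }
    nra.
Qed.

Lemma PI2_sub_inv_lt_atan M v : 0 < M -> M < v -> PI / 2 - / M < atan v.
Proof.
  intros HM HMv.
  pose proof (atan_increasing _ _ HMv). pose proof (atan_inv M HM).
  pose proof (atan_le_id (/ M) (Rlt_le _ _ (Rinv_0_lt_compat _ HM))). lra.
Qed.

Lemma is_RInt_scal_atan K p q :
  is_RInt (fun x => K / (1 + x ^ 2)) p q (K * (atan q - atan p)).
Proof.
  replace (K * (atan q - atan p)) with (minus (K * atan q) (K * atan p))
    by (unfold minus, plus, opp; simpl; ring).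
  apply (is_RInt_derive (fun x => K * atan x)).
  - intros x _. pose proof (is_derive_atan x) as H. apply (is_derive_scal _ x K) in H.
    replace (K / (1 + x ^ 2)) with (K * / (1 + x²)) by (unfold Rsqr; field; nra).
    exact H.
  - intros x _. apply (ex_derive_continuous (V := R_NormedModule)). auto_derive. nra.
Qed.

Lemma ex_RInt_of_continuous (f : R -> R) u v : (forall x, continuous f x) -> ex_RInt f u v.
Proof. intros Hf. apply (ex_RInt_continuous (V := R_CompleteNormedModule)). intros; apply Hf. Qed.

Section DominatedIntegral.

Variables (g : R -> R) (K : R).
Hypothesis g_cont : forall x, continuous g x.
Hypothesis g_dom : forall x, Rabs (g x) <= K / (1 + x ^ 2).

Lemma abs_RInt_le_atan p q : Rabs (RInt g p q) <= K * Rabs (atan q - atan p).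
Proof.
  assert (Hle : forall u v, u <= v -> Rabs (RInt g u v) <= K * (atan v - atan u)).
  { intros u v Huv.
    rewrite <- (is_RInt_unique _ _ _ _ (is_RInt_scal_atan K u v)).
    eapply Rle_trans; [apply abs_RInt_le; [exact Huv | now apply ex_RInt_of_continuous]|].
    apply RInt_le; [exact Huv | | eexists; apply is_RInt_scal_atan | intros x _; apply g_dom].
    apply ex_RInt_of_continuous. intros x.
    apply (continuous_comp g Rabs); [apply g_cont | apply continuous_Rabs]. }
  destruct (Rle_or_lt p q) as [Hpq | Hqp].
  - rewrite (Rabs_pos_eq (atan q - atan p)); [now apply Hle|].
    destruct Hpq as [Hpq | ->]; [pose proof (atan_increasing _ _ Hpq)|]; lra.
  - rewrite <- opp_RInt_swap by apply (ex_RInt_of_continuous _ _ _ g_cont).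
    change (Rabs (- RInt g q p) <= K * Rabs (atan q - atan p)).
    pose proof (atan_increasing _ _ Hqp).
    rewrite Rabs_Ropp, (Rabs_left (atan q - atan p)), Ropp_minus_distr by lra. apply Hle; lra.
Qed.

(* Cauchy criterion: outside [-M, M] with M = 2K/eps + 1,
   the atan bound makes the tails smaller than eps. *)
Lemma ex_is_RInt_gen_dom :
  exists L, is_RInt_gen g (Rbar_locally m_infty) (Rbar_locally p_infty) L.
Proof.
  assert (HK : 0 <= K).
  { specialize (g_dom 0). pose proof (Rabs_pos (g 0)). lra. }
  assert (HP : ProperFilter (filter_prod (Rbar_locally m_infty) (Rbar_locally p_infty))).
  { apply filter_prod_proper; apply Rbar_locally_filter. }
  destruct (proj1 (filterlim_locally_cauchy (U := R_CompleteSpace)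
     (fun ab : R * R => RInt g (fst ab) (snd ab)))) as [L HL].
  - intros eps. pose proof (cond_pos eps) as Heps.
    set (M := 2 * K / eps + 1).
    assert (HM : 0 < M) by (unfold M; pose proof (Rdiv_le_0_compat (2 * K) eps); lra).
    assert (HKM : 2 * K / M < eps).
    { apply Rlt_div_l; [lra|]. unfold M.
      replace (eps * (2 * K / eps + 1)) with (2 * K + eps) by (field; lra). lra. }
    exists (fun ab : R * R => fst ab < - M /\ M < snd ab). split.
    + apply (Filter_prod _ _ _ (fun u => u < - M) (fun v => M < v));
        [exists (- M) | exists M | ]; simpl; auto.
    + intros [u1 v1] [u2 v2] [Hu1 Hv1] [Hu2 Hv2]. simpl in *.
      change (Rabs (RInt g u2 v2 - RInt g u1 v1) < eps).
      rewrite <- (RInt_Chasles g u1 u2 v1), <- (RInt_Chasles g u2 v2 v1)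
        by apply (ex_RInt_of_continuous _ _ _ g_cont).
      change (Rabs (RInt g u2 v2 - (RInt g u1 u2 + (RInt g u2 v2 + RInt g v2 v1))) < eps).
      replace (RInt g u2 v2 - (RInt g u1 u2 + (RInt g u2 v2 + RInt g v2 v1)))
        with (- (RInt g u1 u2 + RInt g v2 v1)) by ring.
      rewrite Rabs_Ropp. eapply Rle_lt_trans; [apply Rabs_triang|].
      pose proof (abs_RInt_le_atan u1 u2). pose proof (abs_RInt_le_atan v2 v1).
      assert (Hu : Rabs (atan u2 - atan u1) <= / M).
      { pose proof (PI2_sub_inv_lt_atan M (- u1) HM ltac:(lra)).
        pose proof (PI2_sub_inv_lt_atan M (- u2) HM ltac:(lra)).
        pose proof (atan_bound u1). pose proof (atan_bound u2).
        rewrite atan_opp in *. apply Rabs_le; lra. }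
      assert (Hv : Rabs (atan v1 - atan v2) <= / M).
      { pose proof (PI2_sub_inv_lt_atan M v1 HM Hv1).
        pose proof (PI2_sub_inv_lt_atan M v2 HM Hv2).
        pose proof (atan_bound v1). pose proof (atan_bound v2). apply Rabs_le; lra. }
      apply (Rmult_le_compat_l K) in Hu, Hv; lra.
  - exists L. intros P HLP.
    unfold filtermapi.
    apply (filter_imp (fun ab : R * R => P (RInt g (fst ab) (snd ab)))); [|now apply HL].
    intros [u v] Huv. exists (RInt g u v). split; [|exact Huv].
    apply (RInt_correct (V := R_CompleteNormedModule)), ex_RInt_of_continuous, g_cont.
Qed.

End DominatedIntegral.

Lemma is_RInt_gen_le_sym (g : R -> R) L B :
  is_RInt_gen g (Rbar_locally m_infty) (Rbar_locally p_infty) L ->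
  (forall eps, 0 < eps -> exists N, forall n, N <= n -> RInt g (- n) n <= B + eps) ->
  L <= B.
Proof.
  intros HL Hsym. apply Rle_plus_epsilon. intros eps Heps.
  destruct (HL _ (locally_ball L (mkposreal (eps / 2) ltac:(lra))))
    as [Q R [M1 HQ] [M2 HR] HQR].
  destruct (Hsym (eps / 2) ltac:(lra)) as [N HN].
  set (n := Rmax N (Rmax (- M1) M2) + 1).
  assert (HNn : N <= n) by (unfold n; pose proof (Rmax_l N (Rmax (- M1) M2)); lra).
  assert (HMn : - M1 < n /\ M2 < n).
  { unfold n. pose proof (Rmax_r N (Rmax (- M1) M2)).
    pose proof (Rmax_l (- M1) M2). pose proof (Rmax_r (- M1) M2). lra. }
  destruct (HQR (- n) n) as [y [Hy Hball]]; [apply HQ; lra | apply HR; lra |].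
  simpl in Hy. rewrite <- (is_RInt_unique _ _ _ _ Hy) in Hball.
  specialize (HN n HNn).
  change (Rabs (RInt g (- n) n - L) < eps / 2) in Hball.
  apply Rabs_lt_between' in Hball. lra.
Qed.

Lemma RInt_sym_comp_opp (f : R -> R) n : (forall x, continuous f x) ->
  RInt (fun x => f (- x)) (- n) n = RInt f (- n) n.
Proof.
  intros Hf.
  assert (Hint : is_RInt f (- n) (- - n) (RInt f (- n) n)).
  { rewrite Ropp_involutive. apply (RInt_correct (V := R_CompleteNormedModule)).
    now apply ex_RInt_of_continuous. }
  pose proof (is_RInt_unique _ _ _ _ (is_RInt_opp _ _ _ _
    (is_RInt_swap _ _ _ _ (is_RInt_comp_opp f n (- n) _ Hint)))) as H.
  change (RInt (fun y => - - f (- y)) (- n) n = - - RInt f (- n) n) in H.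
  rewrite Ropp_involutive in H. rewrite <- H.
  apply RInt_ext. intros x _. symmetry. apply Ropp_involutive.
Qed.

Lemma tanh_inv_exp y : tanh y = (exp y - / exp y) / (exp y + / exp y).
Proof. unfold tanh. now rewrite exp_Ropp. Qed.

Lemma sech2_inv_exp y : 1 - tanh y ^ 2 = 4 / (exp y + / exp y) ^ 2.
Proof.
  rewrite tanh_inv_exp. pose proof (exp_pos y) as He.
  pose proof (Rinv_0_lt_compat _ He). field. split; nra.
Qed.

Lemma Rabs_tanh_le1 y : Rabs (tanh y) <= 1.
Proof.
  rewrite tanh_inv_exp. pose proof (exp_pos y) as He.
  pose proof (Rinv_0_lt_compat _ He).
  unfold Rdiv. rewrite Rabs_mult, Rabs_inv, (Rabs_pos_eq (exp y + / exp y)) by lra.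
  apply (Rmult_le_reg_r (exp y + / exp y)); [lra|].
  rewrite Rmult_assoc, Rinv_l, Rmult_1_r, Rmult_1_l by lra.
  apply Rabs_le; lra.
Qed.

Lemma sech2_ge0 y : 0 <= 1 - tanh y ^ 2.
Proof.
  pose proof (Rabs_tanh_le1 y). pose proof (Rabs_pos (tanh y)).
  rewrite <- (pow2_abs (tanh y)). nra.
Qed.

Lemma is_derive_tanh y : is_derive tanh y (1 - tanh y ^ 2).
Proof.
  unfold tanh. pose proof (exp_pos y). pose proof (exp_pos (- y)).
  auto_derive; [lra | field; lra].
Qed.

Lemma is_derive_sech2 y :
  is_derive (fun y => 1 - tanh y ^ 2) y (- 2 * tanh y * (1 - tanh y ^ 2)).
Proof.
  unfold tanh. pose proof (exp_pos y). pose proof (exp_pos (- y)).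
  auto_derive; [lra | field; lra].
Qed.

Lemma Derive_n_tanh_1 y : Derive_n tanh 1 y = 1 - tanh y ^ 2.
Proof. apply is_derive_unique, is_derive_tanh. Qed.

Lemma Derive_n_tanh_2 y : Derive_n tanh 2 y = - 2 * tanh y * (1 - tanh y ^ 2).
Proof.
  simpl. rewrite (Derive_ext _ (fun y => 1 - tanh y ^ 2)) by apply Derive_n_tanh_1.
  apply is_derive_unique, is_derive_sech2.
Qed.

Lemma exp_ge_sqr z : 0 <= z -> (1 + z / 2) ^ 2 <= exp z.
Proof.
  intros Hz. replace z with (z / 2 + z / 2) at 2 by field. rewrite exp_plus.
  pose proof (exp_ineq1_le (z / 2)). nra.
Qed.

Lemma exp_ge_cube z : 0 <= z -> (z / 3) ^ 3 <= exp z.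
Proof.
  intros Hz. replace z with (z / 3 + z / 3 + z / 3) at 2 by field. rewrite !exp_plus.
  pose proof (exp_ineq1_le (z / 3)).
  replace (exp (z / 3) * exp (z / 3) * exp (z / 3)) with (exp (z / 3) ^ 3) by ring.
  apply pow_incr. lra.
Qed.

Lemma exp_add_inv_ge_poly y : (1 + y ^ 2) / 4 <= exp y + / exp y.
Proof.
  rewrite <- exp_Ropp. pose proof (exp_pos y). pose proof (exp_pos (- y)).
  destruct (Rle_or_lt 0 y).
  - pose proof (exp_ge_sqr y ltac:(lra)). nra.
  - pose proof (exp_ge_sqr (- y) ltac:(lra)). nra.
Qed.

Lemma sech2_mul_sqr_le y : (1 - tanh y ^ 2) * (1 + y ^ 2) ^ 2 <= 64.
Proof.
  rewrite sech2_inv_exp. pose proof (exp_add_inv_ge_poly y) as Hpoly.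
  set (D := exp y + / exp y) in *.
  assert (0 < D) by (pose proof (pow2_ge_0 y); lra).
  assert ((1 + y ^ 2) ^ 2 <= (4 * D) ^ 2)
    by (apply pow_incr; pose proof (pow2_ge_0 y); lra).
  replace (4 / D ^ 2 * (1 + y ^ 2) ^ 2) with (4 * (1 + y ^ 2) ^ 2 / D ^ 2) by (field; lra).
  apply Rle_div_l; [apply pow_lt|]; lra.
Qed.

Lemma sech2_mul_pow6_le y : 0 <= y -> (1 - tanh y ^ 2) * y ^ 6 <= 2916.
Proof.
  intros Hy. rewrite sech2_inv_exp.
  pose proof (exp_ge_cube y Hy). pose proof (exp_pos y) as He.
  pose proof (Rinv_0_lt_compat _ He).
  set (D := exp y + / exp y) in *.
  assert (0 < D) by (unfold D; lra).
  assert (y ^ 6 <= 729 * D ^ 2).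
  { replace (y ^ 6) with (729 * ((y / 3) ^ 3) ^ 2) by field.
    apply Rmult_le_compat_l; [lra|]. apply pow_incr.
    split; [apply pow_le|unfold D]; lra. }
  replace (4 / D ^ 2 * y ^ 6) with (4 * y ^ 6 / D ^ 2) by (field; lra).
  apply Rle_div_l; [apply pow_lt|]; lra.
Qed.

Lemma sqrt_2PI_ge1 : 1 <= sqrt (2 * PI).
Proof. rewrite <- sqrt_1. apply sqrt_le_1_alt. pose proof PI2_1. lra. Qed.

Lemma exp_neg_sqr_le1 z : exp (- z ^ 2 / 2) <= 1.
Proof.
  rewrite <- exp_0. destruct (Req_dec z 0) as [-> | Hz].
  - right. f_equal. field.
  - left. apply exp_increasing. pose proof (pow2_gt_0 z Hz). lra.
Qed.

Lemma gauss_density_bounds m x : 0 <= gauss_density m x <= 1.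
Proof.
  unfold gauss_density. pose proof sqrt_2PI_ge1.
  pose proof (exp_pos (- (x - m) ^ 2 / 2)). pose proof (exp_neg_sqr_le1 (x - m)).
  split; [apply Rdiv_le_0_compat | apply Rle_div_l]; lra.
Qed.

Lemma Rabs_gauss_slope_le w :
  Rabs (w * exp (- w ^ 2 / 2)) <= 1 /\
  Rabs (w * exp (- w ^ 2 / 2)) * Rabs w ^ 5 <= 216.
Proof.
  rewrite <- (pow2_abs w). set (W := Rabs w).
  assert (HW : 0 <= W) by apply Rabs_pos.
  replace (- W ^ 2 / 2) with (- (W ^ 2 / 2)) by field. rewrite exp_Ropp.
  pose proof (exp_pos (W ^ 2 / 2)).
  rewrite Rabs_mult, (Rabs_pos_eq (/ _)) by (apply Rlt_le, Rinv_0_lt_compat; lra).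
  fold W. pose proof (exp_ineq1_le (W ^ 2 / 2)).
  pose proof (exp_ge_cube (W ^ 2 / 2) ltac:(nra)).
  split.
  - apply Rle_div_l; [lra|]. nra.
  - replace (W * / exp (W ^ 2 / 2) * W ^ 5) with (W ^ 6 / exp (W ^ 2 / 2)) by (field; lra).
    apply Rle_div_l; [lra|].
    replace ((W ^ 2 / 2 / 3) ^ 3) with (W ^ 6 / 216) in * by field. lra.
Qed.

Lemma gauss_density_mvt a b x : exists xi, Rmin b a <= xi <= Rmax b a /\
  gauss_density a x - gauss_density b x =
  (x - xi) * exp (- (x - xi) ^ 2 / 2) / sqrt (2 * PI) * (a - b).
Proof.
  pose proof sqrt_2PI_ge1.
  destruct (MVT_gen (fun m => gauss_density m x) b a
    (fun m => (x - m) * exp (- (x - m) ^ 2 / 2) / sqrt (2 * PI))) as [xi Hxi].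
  - intros m _. unfold gauss_density. auto_derive; [lra|].
    replace (- ((x + - m) * ((x + - m) * 1)) * / 2) with (- (x - m) ^ 2 / 2) by field.
    field. lra.
  - intros m _. apply derivable_continuous_pt, ex_derive_Reals_0.
    unfold gauss_density. auto_derive. lra.
  - now exists xi.
Qed.

Definition G_kernel (b x : R) : R :=
  b * (1 - tanh (b * x) ^ 2) * (b * x * tanh (b * x) + x ^ 2 - 1).

Definition G_integrand (m b x : R) : R := gauss_density m x * G_kernel b x.

Lemma G_eq_RInt_gen b a :
  G b a = RInt_gen (G_integrand a b) (Rbar_locally m_infty) (Rbar_locally p_infty).
Proof.
  unfold G, gauss_expect. f_equal. apply functional_extensionality. intro x.
  unfold G_integrand, G_kernel. rewrite Derive_n_tanh_2, Derive_n_tanh_1. field.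
Qed.

Lemma G_integrand_continuous m b x : continuous (G_integrand m b) x.
Proof.
  apply (ex_derive_continuous (V := R_NormedModule)).
  unfold G_integrand, gauss_density, G_kernel, tanh.
  pose proof sqrt_2PI_ge1. pose proof (exp_pos (b * x)). pose proof (exp_pos (- (b * x))).
  auto_derive. repeat split; lra.
Qed.

Lemma G_kernel_bound b x : 1 <= b ->
  Rabs (G_kernel b x) * (1 + x ^ 2) <= 2 * b * ((1 - tanh (b * x) ^ 2) * (1 + (b * x) ^ 2) ^ 2).
Proof.
  intros Hb. unfold G_kernel.
  set (y := b * x). set (t := tanh y). set (S := 1 - t ^ 2).
  assert (HS : 0 <= S) by apply sech2_ge0.
  assert (Ht : Rabs t <= 1) by apply Rabs_tanh_le1.
  assert (Hxy : x ^ 2 <= y ^ 2).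
  { unfold y. rewrite Rpow_mult_distr.
    assert (1 <= b ^ 2) by nra. pose proof (pow2_ge_0 x). nra. }
  assert (Hyt : Rabs (y * t) <= 1 + y ^ 2).
  { rewrite Rabs_mult. pose proof (Rabs_pos y). pose proof (Rabs_pos t).
    assert (Rabs y <= 1 + y ^ 2) by (rewrite <- (pow2_abs y); nra). nra. }
  assert (Hsum : Rabs (y * t + x ^ 2 - 1) <= 2 * (1 + y ^ 2)).
  { unfold Rminus. eapply Rle_trans; [apply Rabs_triang|].
    rewrite Rabs_Ropp, Rabs_R1.
    eapply Rle_trans; [apply Rplus_le_compat_r, Rabs_triang|].
    rewrite (Rabs_pos_eq (x ^ 2)) by apply pow2_ge_0. lra. }
  replace (b * x * t) with (y * t) by (unfold y; ring).
  rewrite !Rabs_mult, (Rabs_pos_eq b), (Rabs_pos_eq S) by lra.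
  assert (0 <= 1 + x ^ 2) by (pose proof (pow2_ge_0 x); lra).
  assert (Rabs (y * t + x ^ 2 - 1) * (1 + x ^ 2) <= 2 * (1 + y ^ 2) * (1 + y ^ 2))
    by (apply Rmult_le_compat; try lra; apply Rabs_pos).
  assert (0 <= b * S) by nra.
  replace (b * S * Rabs (y * t + x ^ 2 - 1) * (1 + x ^ 2))
    with (b * S * (Rabs (y * t + x ^ 2 - 1) * (1 + x ^ 2))) by ring.
  replace (2 * b * (S * (1 + y ^ 2) ^ 2))
    with (b * S * (2 * (1 + y ^ 2) * (1 + y ^ 2))) by ring.
  apply Rmult_le_compat_l; lra.
Qed.

Lemma G_kernel_decay b x : 1 <= b -> Rabs (G_kernel b x) * (1 + x ^ 2) <= 128 * b.
Proof.
  intros Hb. pose proof (G_kernel_bound b x Hb). pose proof (sech2_mul_sqr_le (b * x)). nra.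
Qed.

Lemma G_integrand_dom m b x : 1 <= b -> Rabs (G_integrand m b x) <= 128 * b / (1 + x ^ 2).
Proof.
  intros Hb. unfold G_integrand.
  pose proof (G_kernel_decay b x Hb). pose proof (gauss_density_bounds m x).
  pose proof (Rabs_pos (G_kernel b x)).
  apply Rle_div_r; [pose proof (pow2_ge_0 x); lra|].
  rewrite Rabs_mult, (Rabs_pos_eq (gauss_density m x)) by lra.
  assert (0 <= Rabs (G_kernel b x) * (1 + x ^ 2)) by (pose proof (pow2_ge_0 x); nra).
  nra.
Qed.

Lemma G_kernel_near b x w : 1000 <= b -> 3 * b / 8 <= Rabs w ->
  Rabs (w * exp (- w ^ 2 / 2)) * (Rabs (G_kernel b x) * (1 + x ^ 2)) <= / 400.
Proof.
  intros Hb Hw.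
  destruct (Rabs_gauss_slope_le w) as [_ Hslope].
  set (s := Rabs (w * exp (- w ^ 2 / 2))) in *.
  assert (Hs : 0 <= s) by apply Rabs_pos.
  pose proof (G_kernel_decay b x ltac:(lra)) as Hk.
  assert (Hw5 : 3 * b / 8 * 375 ^ 4 <= Rabs w ^ 5).
  { replace (Rabs w ^ 5) with (Rabs w * Rabs w ^ 4) by ring.
    assert (375 ^ 4 <= Rabs w ^ 4) by (apply pow_incr; lra).
    apply Rmult_le_compat; lra. }
  assert (s * (3 * b / 8 * 375 ^ 4) <= 216)
    by (eapply Rle_trans; [apply Rmult_le_compat_l|]; eauto).
  assert (s * (Rabs (G_kernel b x) * (1 + x ^ 2)) <= s * (128 * b))
    by (apply Rmult_le_compat_l; lra).
  lra.
Qed.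

Lemma G_kernel_far b x : 1000 <= b -> 3 * b / 8 < x ->
  Rabs (G_kernel b x) * (1 + x ^ 2) <= / 400.
Proof.
  intros Hb Hx.
  pose proof (G_kernel_bound b x ltac:(lra)) as Hk.
  set (y := b * x) in *. set (S := 1 - tanh y ^ 2) in *.
  assert (HS : 0 <= S) by apply sech2_ge0.
  assert (Hy : 375 * b <= y) by (unfold y; nra).
  pose proof (sech2_mul_pow6_le y ltac:(lra)) as Hpow6. fold S in Hpow6.
  assert (Hy4 : (1 + y ^ 2) ^ 2 <= 4 * y ^ 4).
  { replace (4 * y ^ 4) with ((2 * y ^ 2) ^ 2) by ring.
    apply pow_incr. pose proof (pow2_ge_0 y). nra. }
  assert (HSy4 : 0 <= S * y ^ 4) by (apply Rmult_le_pos; [lra | apply pow_le; lra]).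
  assert (S * y ^ 4 * (140625000 * b) <= 2916).
  { eapply Rle_trans; [|exact Hpow6].
    replace (S * y ^ 6) with (S * y ^ 4 * y ^ 2) by ring.
    apply Rmult_le_compat_l; nra. }
  assert (S * (1 + y ^ 2) ^ 2 <= S * (4 * y ^ 4)) by (apply Rmult_le_compat_l; lra).
  nra.
Qed.

Lemma gauss_slope_G_kernel_le b x xi : 1000 <= b -> 3 * b / 4 <= xi ->
  Rabs ((x - xi) * exp (- (x - xi) ^ 2 / 2)) * (Rabs (G_kernel b x) * (1 + x ^ 2)) <= / 400.
Proof.
  intros Hb Hxi. destruct (Rle_or_lt x (3 * b / 8)) as [Hx | Hx].
  - apply G_kernel_near; [lra|]. rewrite Rabs_left1; lra.
  - destruct (Rabs_gauss_slope_le (x - xi)) as [Hslope _].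
    pose proof (G_kernel_far b x Hb Hx).
    pose proof (Rabs_pos ((x - xi) * exp (- (x - xi) ^ 2 / 2))).
    assert (0 <= Rabs (G_kernel b x) * (1 + x ^ 2))
      by (apply Rmult_le_pos; [apply Rabs_pos | pose proof (pow2_ge_0 x); lra]).
    nra.
Qed.

Lemma G_integrand_sub_le a b x : 1000 <= b -> 3 * b / 4 <= a ->
  Rabs (G_integrand a b x - G_integrand b b x) <= Rabs (a - b) / 400 / (1 + x ^ 2).
Proof.
  intros Hb Ha. unfold G_integrand.
  destruct (gauss_density_mvt a b x) as [xi [Hxi Hmvt]].
  assert (Hxi' : 3 * b / 4 <= xi) by (eapply Rle_trans; [apply Rmin_glb | apply Hxi]; lra).
  pose proof (gauss_slope_G_kernel_le b x xi Hb Hxi') as Hkey.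
  rewrite <- Rmult_minus_distr_r, Hmvt.
  apply Rle_div_r; [pose proof (pow2_ge_0 x); lra|].
  pose proof sqrt_2PI_ge1.
  set (s := (x - xi) * exp (- (x - xi) ^ 2 / 2)) in *.
  set (Q := Rabs (G_kernel b x) * (1 + x ^ 2)) in *.
  unfold Rdiv. rewrite !Rabs_mult, Rabs_inv, (Rabs_pos_eq (sqrt _)) by lra.
  assert (0 < / sqrt (2 * PI) <= 1).
  { split; [apply Rinv_0_lt_compat; lra|]. rewrite <- Rinv_1. apply Rinv_le_contravar; lra. }
  set (A := Rabs (a - b)).
  assert (0 <= Rabs s) by apply Rabs_pos. assert (0 <= A) by apply Rabs_pos.
  assert (0 <= Q) by (apply Rmult_le_pos; [apply Rabs_pos | pose proof (pow2_ge_0 x); lra]).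
  replace (Rabs s * / sqrt (2 * PI) * A * Rabs (G_kernel b x) * (1 + x ^ 2))
    with (/ sqrt (2 * PI) * A * (Rabs s * Q)) by (unfold Q; ring).
  assert (Rabs s * Q * A <= / 400 * A) by (apply Rmult_le_compat_r; lra).
  assert (0 <= Rabs s * Q * A) by (apply Rmult_le_pos; [apply Rmult_le_pos|]; lra).
  nra.
Qed.

(* This is -(2 b e^{-b^2/2} / sqrt(2 PI)) x e^{-x^2/2} sech(b x); differentiating it uses
   e^{-(x -+ b)^2/2} = e^{-x^2/2} e^{-b^2/2} e^{+-b x}. *)
Definition G_sym_primitive (b x : R) : R :=
  - (4 * b * exp (- b ^ 2 / 2) / sqrt (2 * PI)) * x * exp (- x ^ 2 / 2)
  / (exp (b * x) + exp (- (b * x))).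

Lemma is_derive_G_sym_primitive b x :
  is_derive (G_sym_primitive b) x (G_integrand b b x + G_integrand b b (- x)).
Proof.
  unfold G_sym_primitive. pose proof sqrt_2PI_ge1.
  pose proof (exp_pos (b * x)). pose proof (exp_pos (- (b * x))).
  auto_derive; [lra|].
  unfold G_integrand, G_kernel, gauss_density, tanh.
  replace (- (x - b) ^ 2 / 2) with (- x ^ 2 / 2 + b * x + - b ^ 2 / 2) by field.
  replace (- (- x - b) ^ 2 / 2) with (- x ^ 2 / 2 + - (b * x) + - b ^ 2 / 2) by field.
  replace (b * - x) with (- (b * x)) by ring.
  rewrite Ropp_involutive, !exp_plus.
  replace (- (b * (b * 1)) / 2) with (- b ^ 2 / 2) by field.
  replace (- (x * (x * 1)) * / 2) with (- x ^ 2 / 2) by field.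
  rewrite exp_Ropp in *.
  set (E := exp (b * x)) in *.
  field. repeat split; nra.
Qed.

Lemma G_sym_primitive_odd b x : G_sym_primitive b (- x) = - G_sym_primitive b x.
Proof.
  unfold G_sym_primitive. pose proof sqrt_2PI_ge1.
  pose proof (exp_pos (b * x)). pose proof (exp_pos (- (b * x))).
  replace (b * - x) with (- (b * x)) by ring. rewrite Ropp_involutive.
  replace ((- x) ^ 2) with (x ^ 2) by ring.
  field. lra.
Qed.

Lemma RInt_G_integrand_diag b n : RInt (G_integrand b b) (- n) n = G_sym_primitive b n.
Proof.
  assert (Hcont : forall x, continuous (G_integrand b b) x) by apply G_integrand_continuous.
  assert (Hcont_opp : forall x, continuous (fun x => G_integrand b b (- x)) x).
  { intros x. apply (continuous_comp Ropp (G_integrand b b)); [|apply Hcont].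
    apply (ex_derive_continuous (V := R_NormedModule)). auto_derive. easy. }
  assert (Hsum : is_RInt (fun x => G_integrand b b x + G_integrand b b (- x)) (- n) n
                   (2 * G_sym_primitive b n)).
  { replace (2 * G_sym_primitive b n)
      with (minus (G_sym_primitive b n) (G_sym_primitive b (- n)))
      by (rewrite G_sym_primitive_odd; unfold minus, plus, opp; simpl; ring).
    apply (is_RInt_derive (G_sym_primitive b)).
    - intros x _. apply is_derive_G_sym_primitive.
    - intros x _. apply (continuous_plus (G_integrand b b)); [apply Hcont | apply Hcont_opp]. }
  apply (is_RInt_unique (V := R_CompleteNormedModule)) in Hsum.
  rewrite (RInt_plus (V := R_CompleteNormedModule)) in Hsum;
    try now apply ex_RInt_of_continuous.
  change (RInt (G_integrand b b) (- n) n + RInt (fun x => G_integrand b b (- x)) (- n) n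
          = 2 * G_sym_primitive b n) in Hsum.
  rewrite RInt_sym_comp_opp in Hsum by apply Hcont. lra.
Qed.

Lemma Rabs_G_sym_primitive_le b n : 0 < b -> 1 <= n -> Rabs (G_sym_primitive b n) <= 432 * b / n.
Proof.
  intros Hb Hn. unfold G_sym_primitive.
  pose proof sqrt_2PI_ge1. pose proof (exp_pos (- b ^ 2 / 2)). pose proof (exp_neg_sqr_le1 b).
  set (C := 4 * b * exp (- b ^ 2 / 2) / sqrt (2 * PI)).
  assert (HC : 0 <= C <= 4 * b).
  { unfold C. split; [apply Rdiv_le_0_compat; nra|].
    apply Rle_div_l; nra. }
  set (D := exp (b * n) + exp (- (b * n))).
  assert (HD : 2 <= D).
  { unfold D. rewrite exp_Ropp. pose proof (exp_pos (b * n)) as He.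
    assert (exp (b * n) + / exp (b * n) - 2 = (exp (b * n) - 1) ^ 2 / exp (b * n))
      by (field; lra).
    pose proof (Rdiv_le_0_compat _ _ (pow2_ge_0 (exp (b * n) - 1)) He). lra. }
  destruct (Rabs_gauss_slope_le n) as [_ Hslope].
  set (s := n * exp (- n ^ 2 / 2)) in *.
  assert (Hsn : Rabs s * n <= 216).
  { rewrite (Rabs_pos_eq n) in Hslope by lra.
    assert (n <= n ^ 5).
    { replace (n ^ 5) with (n * n ^ 4) by ring.
      assert (1 <= n ^ 4) by (rewrite <- (pow1 4); apply pow_incr; lra). nra. }
    pose proof (Rabs_pos s). nra. }
  replace (- C * n * exp (- n ^ 2 / 2) / D) with (- (C * s / D)) by (unfold s; field; lra).
  rewrite Rabs_Ropp, Rabs_div, Rabs_mult, (Rabs_pos_eq C), (Rabs_pos_eq D) by lra.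
  apply (Rle_div_r _ _ n); [lra|]. unfold Rdiv.
  assert (HinvD : 0 < / D <= / 2).
  { split; [apply Rinv_0_lt_compat | apply Rinv_le_contravar]; lra. }
  replace (C * Rabs s * / D * n) with (C * / D * (Rabs s * n)) by ring.
  assert (C * / D <= 4 * b * / 2) by (apply Rmult_le_compat; lra).
  pose proof (Rabs_pos s).
  assert (C * / D * (Rabs s * n) <= 4 * b * / 2 * 216)
    by (apply Rmult_le_compat; nra).
  lra.
Qed.

Lemma RInt_G_integrand_sym_le a b n : 1000 <= b -> 3 * b / 4 <= a -> 1 <= n ->
  RInt (G_integrand a b) (- n) n <= Rabs (a - b) / 100 + 432 * b / n.
Proof.
  intros Hb Ha Hn.
  assert (Hex : forall m, ex_RInt (G_integrand m b) (- n) n).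
  { intros m. apply ex_RInt_of_continuous, G_integrand_continuous. }
  assert (Hsplit : RInt (G_integrand a b) (- n) n =
    RInt (fun x => G_integrand a b x - G_integrand b b x) (- n) n + RInt (G_integrand b b) (- n) n).
  { rewrite (RInt_minus (V := R_CompleteNormedModule)) by apply Hex.
    change (RInt (G_integrand a b) (- n) n = RInt (G_integrand a b) (- n) n
      - RInt (G_integrand b b) (- n) n + RInt (G_integrand b b) (- n) n). lra. }
  pose proof (abs_RInt_le_atan (fun x => G_integrand a b x - G_integrand b b x) (Rabs (a - b) / 400)
    (fun x => continuous_minus _ _ x (G_integrand_continuous a b x) (G_integrand_continuous b b x))
    (fun x => G_integrand_sub_le a b x Hb Ha) (- n) n) as Hdiff.
  assert (Hatan : Rabs (atan n - atan (- n)) <= 4).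
  { pose proof (atan_bound n). pose proof (atan_bound (- n)). pose proof PI_4.
    apply Rabs_le. lra. }
  pose proof (Rabs_pos (a - b)).
  apply (Rmult_le_compat_l (Rabs (a - b) / 400)) in Hatan; [|lra].
  pose proof (Rabs_G_sym_primitive_le b n ltac:(lra) Hn) as Hprim.
  rewrite Hsplit, RInt_G_integrand_diag.
  apply Rabs_le_between in Hdiff. apply Rabs_le_between in Hprim.
  lra.
Qed.

Theorem lemmaC8 : exists c : R, 0 < c /\
  forall mu mus : R, 0 < mu -> 0 < mus -> c <= mu -> mu <= 4 / 3 * mus ->
    G mu mus <= (1 / 100) * Rabs (mu - mus).
Proof.
  exists 1000. split; [lra|]. intros mu mus _ _ Hmu Hmus.
  destruct (ex_is_RInt_gen_dom (G_integrand mus mu) (128 * mu)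
    (G_integrand_continuous mus mu) (fun x => G_integrand_dom mus mu x ltac:(lra))) as [L HL].
  rewrite G_eq_RInt_gen, (is_RInt_gen_unique _ L HL), Rabs_minus_sym.
  apply (is_RInt_gen_le_sym _ _ _ HL). intros eps Heps.
  exists (Rmax 1 (432 * mu / eps)). intros n Hn.
  pose proof (Rmax_l 1 (432 * mu / eps)) as Hn1.
  pose proof (Rmax_r 1 (432 * mu / eps)) as Hneps.
  apply (Rle_div_l _ _ eps) in Hneps; [|lra].
  assert (432 * mu / n <= eps) by (apply (Rle_div_l _ _ n); nra).
  pose proof (RInt_G_integrand_sym_le mus mu n Hmu ltac:(lra) ltac:(lra)).
  lra.
Qed.
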